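(* Let $G$ be the corresponding graph of an array $A$ with reach one, let $F$ be a resulting DFS forest of $G$, and let $T$ be any component of $F$. Then the root of $T$ has at most two outgoing arcs, every leaf of $T$ has at most one incoming arc, and every internal vertex of $T$ has exactly one incoming and exactly one outgoing arc.
   Context: An array is a finite sequence $A=(A[1],\dots,A[n])$ of pairwise distinct real numbers. The corresponding graph of $A$ with reach one is the directed graph on $\{1,\dots,n\}$ with an arc $(i,j)$ whenever $j\equiv i\pm1\pmod n$, $j\ne i$, and $A[i]<A[j]$ (indices cyclic). The resulting DFS forest of a directed graph is the spanning subgraph consisting of exactly the arcs $(\mathrm{parent}(w),w)$ along which depth-first search discovers new vertices; components are connected components of the underlying undirected graph, and each is a rooted tree whose root is the vertex with no incoming arc. A leaf of a rooted tree is an end-vertex (degree-one vertex) of the tree; an internal vertex is a vertex that is neither the root nor a leaf. *)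

From HB Require Import structures.
From Stdlib Require Import Relations.
From mathcomp Require Import all_boot all_order all_algebra.
From mathcomp Require Import reals.
Set Implicit Arguments. Unset Strict Implicit. Unset Printing Implicit Defensive.
Import Order.TTheory GRing.Theory Num.Theory.

Definition cyc_adj (n : nat) (i j : 'I_n) : bool :=
  (j != i) && ((val j == (val i).+1 %% n) || (val i == (val j).+1 %% n)).

(* The corresponding graph of A with reach one: arc (i,j) iff
   i, j cyclically adjacent and A[i] < A[j]. *)
Definition corr_graph (R : realType) (n : nat) (A : 'I_n -> R) : rel 'I_n :=
  fun i j => cyc_adj i j && (A i < A j)%R.

(* DFS state: (visited set, stack (top first), discovered tree arcs). *)
Definition dfs_state (n : nat) : Type :=
  ({set 'I_n} * seq 'I_n * seq ('I_n * 'I_n))%type.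

(* One nondeterministic step of depth-first search (any vertex order and
   any neighbour order are allowed). *)
Inductive dfs_step (n : nat) (G : rel 'I_n) : dfs_state n -> dfs_state n -> Prop :=
| DfsRoot (vis : {set 'I_n}) (Fs : seq ('I_n * 'I_n)) (v : 'I_n) :
    v \notin vis ->
    dfs_step G (vis, [::], Fs) (v |: vis, [:: v], Fs)
| DfsDiscover (vis : {set 'I_n}) (u : 'I_n) (st : seq 'I_n) (Fs : seq ('I_n * 'I_n)) (w : 'I_n) :
    G u w -> w \notin vis ->
    dfs_step G (vis, u :: st, Fs) (w |: vis, w :: u :: st, rcons Fs (u, w))
| DfsRetreat (vis : {set 'I_n}) (u : 'I_n) (st : seq 'I_n) (Fs : seq ('I_n * 'I_n)) :
    (forall w, G u w -> w \in vis) ->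
    dfs_step G (vis, u :: st, Fs) (vis, st, Fs).

Definition dfs_forest (n : nat) (G : rel 'I_n) (F : rel 'I_n) : Prop :=
  exists Fs : seq ('I_n * 'I_n),
    clos_refl_trans (dfs_state n) (@dfs_step n G)
      (set0, [::], [::] : seq ('I_n * 'I_n)) ([set: 'I_n], [::], Fs) /\
    (forall u w, F u w = ((u, w) \in Fs)).

Definition undirected (n : nat) (F : rel 'I_n) : rel 'I_n :=
  fun u w => F u w || F w u.
Definition component (n : nat) (F : rel 'I_n) (x : 'I_n) : {set 'I_n} :=
  [set y | connect (undirected F) x y].

Definition indeg (n : nat) (F : rel 'I_n) (v : 'I_n) : nat := #|[set u | F u v]|.
Definition outdeg (n : nat) (F : rel 'I_n) (v : 'I_n) : nat := #|[set w | F v w]|.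
Definition tdeg (n : nat) (F : rel 'I_n) (v : 'I_n) : nat :=
  #|[set w | undirected F v w]|.

Definition is_root (n : nat) (F : rel 'I_n) (T : {set 'I_n}) (v : 'I_n) : Prop :=
  v \in T /\ indeg F v = 0.
Definition is_leaf (n : nat) (F : rel 'I_n) (T : {set 'I_n}) (v : 'I_n) : Prop :=
  v \in T /\ tdeg F v = 1.
Definition is_internal (n : nat) (F : rel 'I_n) (T : {set 'I_n}) (v : 'I_n) : Prop :=
  v \in T /\ ~ is_root F T v /\ ~ is_leaf F T v.

(* Every arc of the graph joins cyclically adjacent positions, so every vertex has at
   most two neighbours, and arcs strictly increase A.  Depth-first search discovers
   each vertex at most once, so every vertex of the forest has at most one parent;
   the root, having none, keeps at most its two neighbours as children.  A vertex
   with a parent p and two children would have three distinct neighbours, since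
   A p < A v < A c rules out p = c; hence an internal vertex, which has a parent (it
   is not the root) and a child (otherwise its only tree neighbour would be its
   parent, making it a leaf), has exactly one of each. *)
From HB Require Import structures.
From Stdlib Require Import Relations.
From mathcomp Require Import all_boot all_order all_algebra.
From mathcomp Require Import reals.
Set Implicit Arguments. Unset Strict Implicit. Unset Printing Implicit Defensive.
Import Order.TTheory GRing.Theory Num.Theory.

Section DfsForest.

Variables (n : nat) (G : rel 'I_n).

Definition dfs_invariant (s : dfs_state n) : Prop :=
  let: (vis, _, Fs) := s in
  [/\ all (fun e => G e.1 e.2) Fs,
      {subset map snd Fs <= vis} &
      forall a b v, (a, v) \in Fs -> (b, v) \in Fs -> a = b].

Lemma dfs_step_invariant s s' :
  dfs_step G s s' -> dfs_invariant s -> dfs_invariant s'.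
Proof.
case=> [vis Fs v _ | vis u st Fs w Guw w_new | //] [Fs_G Fs_vis Fs_par].
  by split=> // y /Fs_vis; rewrite in_setU1 orbC => ->.
have old_new a : (a, w) \notin Fs.
  by apply: contra w_new => aw; apply/Fs_vis/mapP; exists (a, w).
split.
- by rewrite all_rcons /= Guw.
- by move=> y; rewrite map_rcons mem_rcons !inE => /orP[-> // | /Fs_vis ->]; rewrite orbT.
- move=> a b v; rewrite !mem_rcons !inE.
  case: (eqVneq v w) => [-> | vw].
    by rewrite (negbTE (old_new a)) (negbTE (old_new b)) !orbF !xpair_eqE
      => /andP[/eqP -> _] /andP[/eqP -> _].
  by rewrite !xpair_eqE (negbTE vw) !andbF /=; exact: Fs_par.
Qed.

Lemma dfs_run_invariant s s' :
  clos_refl_trans _ (@dfs_step n G) s s' -> dfs_invariant s -> dfs_invariant s'.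
Proof.
elim=> [x y /dfs_step_invariant // | // | x y z _ IHxy _ IHyz].
by move=> /IHxy /IHyz.
Qed.

Variable F : rel 'I_n.
Hypothesis F_dfs : dfs_forest G F.

Lemma dfs_forest_invariant :
  exists Fs, dfs_invariant ([set: 'I_n], [::], Fs) /\ forall u w, F u w = ((u, w) \in Fs).
Proof.
case: F_dfs => Fs [run FE]; exists Fs; split=> //.
by apply: (dfs_run_invariant run); split=> // y; rewrite in_set0.
Qed.

Lemma dfs_forest_sub u w : F u w -> G u w.
Proof.
have [Fs [[Fs_G _ _] FE]] := dfs_forest_invariant.
by rewrite FE => /(allP Fs_G).
Qed.

Lemma dfs_forest_indeg_le1 v : indeg F v <= 1.
Proof.
have [Fs [[_ _ Fs_par] FE]] := dfs_forest_invariant.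
by apply/card_le1_eqP => a b; rewrite !inE !FE => av bv; exact: Fs_par av.
Qed.

End DfsForest.

Lemma cyc_adjC n (i j : 'I_n) : cyc_adj i j = cyc_adj j i.
Proof. by rewrite /cyc_adj eq_sym orbC. Qed.

Lemma cyc_adj_sub n (i : 'I_n) : [set j | cyc_adj i j] \subset [set ordS i; ord_pred i].
Proof.
apply/subsetP => j; rewrite !inE => /andP[_ /orP[] /eqP ij].
  by rewrite (_ : j = ordS i) ?eqxx //; exact: val_inj.
by rewrite (_ : i = ordS j) ?ordSK ?eqxx ?orbT //; exact: val_inj.
Qed.

Lemma card_cyc_adj n (i : 'I_n) : #|[set j | cyc_adj i j]| <= 2.
Proof.
by apply: leq_trans (subset_leq_card (cyc_adj_sub i)) _; rewrite cards2 ltnS leq_b1.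
Qed.

Section ReachOne.

Variables (R : realType) (n : nat) (A : 'I_n -> R) (F : rel 'I_n).
Hypothesis F_sub : forall u w, F u w -> corr_graph A u w.

Lemma outdeg_le2 v : outdeg F v <= 2.
Proof.
apply: leq_trans (card_cyc_adj v); apply/subset_leq_card/subsetP => w.
by rewrite !inE => /F_sub /andP[].
Qed.

Lemma outdeg_le1_of_parent p v : F p v -> outdeg F v <= 1.
Proof.
move=> /F_sub /andP[pv Apv]; apply/card_le1_eqP => c1 c2.
rewrite !inE => /F_sub /andP[vc1 Avc1] /F_sub /andP[vc2 Avc2].
apply/eqP; apply: contraTT (card_cyc_adj v) => c21; rewrite -ltnNge.
have p_neq c : (A v < A c)%R -> p != c.
  by apply: contraTneq => <-; rewrite lt_gtF.
have three_nbrs : p |: [set c1; c2] \subset [set j | cyc_adj v j].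
  by apply/subsetP => y; rewrite !inE => /or3P[] /eqP -> //; rewrite cyc_adjC.
apply: leq_trans (subset_leq_card three_nbrs).
by rewrite cardsU1 cards2 eq_sym c21 !inE negb_or !p_neq.
Qed.

End ReachOne.

Lemma tdeg_outdeg0 n (F : rel 'I_n) v : outdeg F v = 0 -> tdeg F v = indeg F v.
Proof.
move/eqP; rewrite cards_eq0 => /eqP out0; apply: eq_card => w.
by rewrite !inE /undirected; have := in_set0 w; rewrite -out0 inE => ->.
Qed.

Theorem proposition2 (R : realType) (n : nat) (A : 'I_n -> R)
    (HA : injective A) (F : rel 'I_n)
    (HF : dfs_forest (corr_graph A) F) (x : 'I_n) :
  (forall r, is_root F (component F x) r -> outdeg F r <= 2) /\
  (forall v, is_leaf F (component F x) v -> indeg F v <= 1) /\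
  (forall v, is_internal F (component F x) v ->
     indeg F v = 1 /\ outdeg F v = 1).
Proof.
have F_sub := dfs_forest_sub HF.
have indeg_le1 := dfs_forest_indeg_le1 HF.
split; first by move=> r _; exact: (outdeg_le2 F_sub r).
split; first by move=> v _; exact: indeg_le1.
move=> v [vT [not_root not_leaf]].
have indeg1 : indeg F v = 1.
  by apply/eqP; rewrite eqn_leq indeg_le1 lt0n; apply/eqP => in0; apply: not_root.
have [p pv] : exists p, F p v.
  have /card_gt0P [p] : 0 < indeg F v by rewrite indeg1.
  by rewrite inE; exists p.
split=> //.
apply/eqP; rewrite eqn_leq (outdeg_le1_of_parent F_sub pv) lt0n /=.
by apply/eqP => out0; apply: not_leaf; rewrite /is_leaf tdeg_outdeg0.
Qed.
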